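(* Let $G$ and $H$ be connected graphs of order at least two. If $\Delta(G_{\rm SR})\ge 2$ or $\Delta(H_{\rm SR})\ge 2$, then $O_{\rm SR}(G\,\square\, H)=\mathcal{B}$.
   Context: All graphs are finite, simple and undirected; $d(x,y)$ is the shortest-path distance and $\Delta$ denotes maximum degree. The Cartesian product $G\,\square\,H$ has vertex set $V(G)\times V(H)$, with $(u,w)$ adjacent to $(u',w')$ iff either $u=u'$ and $ww'\in E(H)$, or $w=w'$ and $uu'\in E(G)$. A set $S\subseteq V(X)$ is a strong resolving set of a connected graph $X$ if for all distinct $x,y\in V(X)$ there exists $z\in S$ such that $x$ lies on a $y$–$z$ geodesic or $y$ lies on an $x$–$z$ geodesic. A vertex $u$ is maximally distant from $v$ if $d(u,v)\ge d(w,v)$ for every neighbor $w$ of $u$; $u,v$ are mutually maximally distant (MMD) if each is maximally distant from the other. The strong resolving graph $X_{\rm SR}$ has vertex set $\{x: x\text{ is MMD with some }y\}$ and edges exactly the MMD pairs. The Maker–Breaker strong resolving game on $X$: Maker and Breaker alternately select a not-yet-chosen vertex of $X$; Maker wins if the vertices he selects contain a strong resolving set of $X$, Breaker wins otherwise. In the M-game Maker moves first, in the B-game Breaker moves first. $O_{\rm SR}(X)=\mathcal{M}$ if Maker has a winning strategy in both games, $\mathcal{B}$ if Breaker has a winning strategy in both, and $\mathcal{N}$ if the first player has a winning strategy in each. *)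

From mathcomp Require Import all_boot.
Set Implicit Arguments. Unset Strict Implicit. Unset Printing Implicit Defensive.

Section Graphs.
Variable T : finType.
Variable e : rel T.

Definition simple_graph : Prop := symmetric e /\ irreflexive e.
Definition connected_graph : Prop := forall x y : T, connect e x y.

Fixpoint ball (x : T) (n : nat) : {set T} :=
  match n with
  | 0 => [set x]
  | n'.+1 => ball x n' :|: [set z | [exists w in ball x n', e w z]]
  end.

(* shortest-path distance (correct for connected graphs, where it is < #|T|) *)
Definition dist (x y : T) : nat := find (fun n => y \in ball x n) (iota 0 #|T|).

Definition on_geodesic (x y z : T) : bool := dist y x + dist x z == dist y z.

Definition strong_resolving (S : {set T}) : Prop :=
  forall x y : T, x != y ->
    exists2 z, z \in S & on_geodesic x y z || on_geodesic y x z.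

Definition max_distant (u v : T) : bool :=
  [forall w, e u w ==> (dist w v <= dist u v)].
Definition mmd (u v : T) : bool := max_distant u v && max_distant v u.

(* strong resolving graph: edges are the MMD pairs (simple graph, no loops) *)
Definition SR_edge (x y : T) : bool := (x != y) && mmd x y.
Definition SR_vertex (x : T) : bool := [exists y, mmd x y].
Definition SR_deg (x : T) : nat := #|[set y | SR_edge x y]|.
Definition Delta_SR : nat := \max_(x | SR_vertex x) SR_deg x.

(* Maker-Breaker strong resolving game.  State: Maker's set M, Breaker's set
   B, whose turn (true = Maker).  k is a fuel bounding the remaining moves. *)
Definition maker_final (M : {set T}) : Prop :=
  exists S : {set T}, S \subset M /\ strong_resolving S.

Fixpoint breaker_wins (k : nat) (M B : {set T}) (maker_turn : bool) : Prop :=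
  match k with
  | 0 => ~ maker_final M
  | k'.+1 =>
    if ~~ [exists v, v \notin M :|: B] then ~ maker_final M
    else if maker_turn then
      forall v, v \notin M :|: B -> breaker_wins k' (v |: M) B false
    else
      exists2 v, v \notin M :|: B & breaker_wins k' M (v |: B) true
  end.

(* Breaker has a winning strategy in the M-game and in the B-game *)
Definition OSR_is_B : Prop :=
  breaker_wins #|T| set0 set0 true /\ breaker_wins #|T| set0 set0 false.
End Graphs.

Definition cart_rel (T1 T2 : finType) (e1 : rel T1) (e2 : rel T2) : rel (T1 * T2) :=
  fun p q => ((p.1 == q.1) && e2 p.2 q.2) || ((p.2 == q.2) && e1 p.1 q.1).

(* Every strong resolving set contains a vertex of each pair of mutually
   maximally distant (MMD) vertices, so Breaker wins as soon as he owns both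
   ends of such a pair.  Distances in G □ H add up coordinatewise, hence
   (g, h) and (g', h') are MMD whenever g, g' and h, h' are.  A vertex g with
   two MMD partners g1, g2 and an MMD pair h, h' in the other factor give two
   disjoint forks (g, h) -> (g1, h'), (g2, h') and (g, h') -> (g1, h), (g2, h).
   Breaker claims the centre of a fork avoided by Maker; Maker can then take
   only one of its two leaves, and Breaker takes the other. *)

From mathcomp Require Import all_boot zify.
Set Implicit Arguments. Unset Strict Implicit. Unset Printing Implicit Defensive.

Section Game.
Variables (T : finType) (e : rel T).

Definition blocking_pair (u v : T) : Prop :=
  forall S, strong_resolving e S -> (u \in S) || (v \in S).

Definition fork (a a1 a2 : T) : Prop :=
  [/\ uniq [:: a; a1; a2], blocking_pair a a1 & blocking_pair a a2].

Lemma breaker_wins_maker_turn k (M B : {set T}) v0 :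
  v0 \notin M :|: B ->
  (forall v, v \notin M :|: B -> breaker_wins e k (v |: M) B false) ->
  breaker_wins e k.+1 M B true.
Proof.
by move=> v0_free win /=; have -> : [exists v, v \notin M :|: B] by apply/existsP; exists v0.
Qed.

Lemma breaker_wins_breaker_turn k (M B : {set T}) v :
  v \notin M :|: B -> breaker_wins e k M (v |: B) true -> breaker_wins e k.+1 M B false.
Proof.
move=> v_free win /=; have -> : [exists v, v \notin M :|: B] by apply/existsP; exists v.
by exists v.
Qed.

Lemma blocking_pair_not_final u v (M : {set T}) :
  blocking_pair u v -> u \notin M -> v \notin M -> ~ maker_final e M.
Proof.
by move=> uv /negbTE uM /negbTE vM [S [/subsetP SM /uv /orP[/SM|/SM]]]; rewrite ?uM ?vM.
Qed.

Lemma breaker_wins_blocking_pair k (M B : {set T}) t u v :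
  blocking_pair u v -> u \in B -> v \in B -> u \notin M -> v \notin M ->
  breaker_wins e k M B t.
Proof.
move=> uv; elim: k M B t => [|k IH] M B t uB vB uM vM /=.
  exact: blocking_pair_not_final uv uM vM.
case: ifP => [_|/negbFE/existsP [w w_free]]; first exact: blocking_pair_not_final uv uM vM.
case: t; last by exists w => //; apply: IH; rewrite // !inE ?uB ?vB orbT.
move=> x; rewrite inE negb_or => /andP [_ xB].
have neq_x y : y \in B -> y != x by apply: contraTneq => ->.
by apply: IH; rewrite // !inE negb_or ?uM ?vM neq_x.
Qed.

Section Fork.
Variables (a a1 a2 : T).
Hypothesis fork_a : fork a a1 a2.

Lemma fork_maker_turn k (M B : {set T}) :
  a \in B -> a \notin M -> a1 \notin M :|: B -> a2 \notin M :|: B ->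
  breaker_wins e k.+2 M B true.
Proof.
case: fork_a => uniq_a aa1 aa2 aB aM a1_free a2_free.
have a1a2 : a1 != a2 by move: uniq_a => /and3P [_ + _]; rewrite inE.
apply: (breaker_wins_maker_turn a1_free) => x; rewrite inE negb_or => /andP [_ xB].
have aMx : a \notin x |: M.
  by rewrite !inE negb_or aM andbT; apply: contraTneq aB => ->.
have [c [c_free cx ac]] : exists c, [/\ c \notin M :|: B, c != x & blocking_pair a c].
  by have [<-|] := eqVneq a1 x; [exists a2; rewrite eq_sym | exists a1].
apply: (breaker_wins_breaker_turn (v := c)); first by move: c_free; rewrite !inE !negb_or cx.
move: c_free; rewrite inE negb_or => /andP [cM _].
by apply: (breaker_wins_blocking_pair _ _ ac) => //; rewrite !inE ?eqxx ?aB ?orbT //= negb_or cx.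
Qed.

Lemma fork_breaker_turn k (M B : {set T}) :
  a \notin M :|: B -> a1 \notin M :|: B -> a2 \notin M :|: B ->
  breaker_wins e k.+3 M B false.
Proof.
case: (fork_a) => /and3P [a_a12 _ _] _ _ a_free a1_free a2_free.
have still_free y : y \in [:: a1; a2] -> y \notin M :|: B -> y \notin M :|: (a |: B).
  move=> y12 y_free; rewrite setUCA in_setU1 negb_or y_free andbT.
  by apply: contraNneq a_a12 => <-.
apply: (breaker_wins_breaker_turn a_free); apply: fork_maker_turn.
- exact: setU11.
- by move: a_free; rewrite inE negb_or => /andP [].
- exact: still_free (mem_head _ _) a1_free.
- exact: still_free (mem_last _ _) a2_free.
Qed.
End Fork.

Lemma OSR_is_B_of_disjoint_forks a a1 a2 b b1 b2 :
  fork a a1 a2 -> fork b b1 b2 -> [disjoint [set a; a1; a2] & [set b; b1; b2]] ->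
  OSR_is_B e.
Proof.
move=> fork_a fork_b disj.
(* The game is played with #|T| moves of fuel; Breaker's strategies need four. *)
have [k card_T] : exists k, #|T| = k.+4.
  have b_fresh : b \notin [set a; a1; a2] by rewrite (disjointFl disj) // !inE eqxx.
  have uniq_ab : uniq [:: b; a; a1; a2].
    by case: fork_a => uniq_a _ _; rewrite cons_uniq uniq_a andbT; move: b_fresh; rewrite !inE orbA.
  have := max_card (mem [:: b; a; a1; a2]); rewrite (card_uniqP uniq_ab) /=.
  by move=> le4; exists (#|T| - 4); rewrite -addn4 subnK.
have avoid x (C : {set T}) c : x \notin C -> c \in C -> c \notin x |: set0 :|: set0.
  by move=> xC cC; rewrite !inE !orbF; apply: contraNneq xC => <-.
rewrite /OSR_is_B card_T; split.
- apply: (breaker_wins_maker_turn (v0 := a)); first by rewrite !inE.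
  move=> x _; case: (boolP (x \in [set a; a1; a2])) => [/(disjointFr disj)/negbT xB | xA].
  + by apply: (fork_breaker_turn fork_b); apply: (avoid _ _ _ xB); rewrite !inE eqxx ?orbT.
  + by apply: (fork_breaker_turn fork_a); apply: (avoid _ _ _ xA); rewrite !inE eqxx ?orbT.
- by apply: (fork_breaker_turn fork_a); rewrite !inE.
Qed.

End Game.

Section Ball.
Variables (T : finType) (e : rel T).

Lemma in_ball0 x y : (y \in ball e x 0) = (y == x).
Proof. by rewrite inE. Qed.

Lemma in_ballS x n y :
  (y \in ball e x n.+1) = (y \in ball e x n) || [exists w in ball e x n, e w y].
Proof. by rewrite /= !inE. Qed.

Lemma ball_edge x y : e x y -> y \in ball e x 1.
Proof.
by move=> exy; rewrite in_ballS; apply/orP; right; apply/existsP; exists x; rewrite in_ball0 eqxx.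
Qed.

Lemma ball_trans x y z n m : y \in ball e x n -> z \in ball e y m -> z \in ball e x (n + m).
Proof.
move=> y_in; elim: m z => [|m IHm] z; first by rewrite in_ball0 addn0 => /eqP ->.
rewrite addnS !in_ballS => /orP [/IHm -> //|/exists_inP [w /IHm w_in ewz]].
by apply/orP; right; apply/exists_inP; exists w.
Qed.

Lemma path_last_ball x p : path e x p -> last x p \in ball e x (size p).
Proof.
elim: p x => [|y p IHp] x; first by rewrite in_ball0.
by move=> /andP [exy /IHp]; apply: ball_trans (ball_edge exy).
Qed.

Lemma ball_connect x y : connect e x y -> exists2 n, n < #|T| & y \in ball e x n.
Proof.
move=> /connectP [p e_p ->]; have [q e_q q_uniq _] := shortenP e_p.
exists (size q); last exact: path_last_ball.
by have := max_card (mem (x :: q)); rewrite (card_uniqP q_uniq).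
Qed.

Lemma dist_le x y n : y \in ball e x n -> dist e x y <= n.
Proof.
move=> y_in; rewrite /dist; case: (ltnP n #|T|) => [n_lt|n_ge].
  by rewrite leqNgt; apply/negP => /(before_find 0); rewrite nth_iota // y_in.
by apply: leq_trans (find_size _ _) _; rewrite size_iota.
Qed.

End Ball.

Lemma ball_homo (T T' : finType) (e : rel T) (e' : rel T') (f : T -> T') x y n :
  {homo f : u v / e u v >-> e' u v} -> y \in ball e x n -> f y \in ball e' (f x) n.
Proof.
move=> f_homo; elim: n y => [|n IHn] y; first by rewrite !in_ball0 => /eqP ->.
rewrite !in_ballS => /orP [/IHn -> //|/exists_inP [w /IHn w_in ewy]].
by apply/orP; right; apply/exists_inP; exists (f w); rewrite ?f_homo.
Qed.

Lemma connect_homo (T T' : finType) (e : rel T) (e' : rel T') (f : T -> T') :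
  {homo f : x y / e x y >-> e' x y} -> {homo f : x y / connect e x y >-> connect e' x y}.
Proof.
move=> f_homo x _ /connectP [p e_p ->]; apply/connectP.
by exists (map f p); rewrite ?last_map //; apply: homo_path f_homo e_p.
Qed.

Section Distance.
Variables (T : finType) (e : rel T).
Hypothesis e_sym : symmetric e.
Hypothesis e_conn : connected_graph e.

Lemma dist_ball x y : y \in ball e x (dist e x y).
Proof.
have [n n_lt y_in] := ball_connect (e_conn x y).
have y_reached : has (fun n => y \in ball e x n) (iota 0 #|T|).
  by apply/hasP; exists n; rewrite ?mem_iota.
have := nth_find 0 y_reached; rewrite nth_iota //.
by move: y_reached; rewrite has_find size_iota.
Qed.

Lemma ball_sym x y n : y \in ball e x n -> x \in ball e y n.
Proof.
elim: n x y => [|n IHn] x y; first by rewrite !in_ball0 eq_sym.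
rewrite in_ballS => /orP [/IHn x_in|/exists_inP [w /IHn x_in ewy]].
  by rewrite in_ballS x_in.
by apply: ball_trans (ball_edge _) x_in; rewrite e_sym.
Qed.

Lemma distC x y : dist e x y = dist e y x.
Proof. by apply/eqP; rewrite eqn_leq !dist_le // ball_sym // dist_ball. Qed.

Lemma dist_triangle x y z : dist e x z <= dist e x y + dist e y z.
Proof. by apply: dist_le; apply: ball_trans; apply: dist_ball. Qed.

Lemma dist_eq0 x y : (dist e x y == 0) = (x == y).
Proof.
apply/idP/eqP => [/eqP dxy0|->]; last by rewrite -leqn0 dist_le ?in_ball0.
by have := dist_ball x y; rewrite dxy0 in_ball0 => /eqP ->.
Qed.

Lemma distxx x : dist e x x = 0.
Proof. by apply/eqP; rewrite dist_eq0. Qed.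

Lemma dist_edge x u w : e u w -> dist e x w <= (dist e x u).+1.
Proof.
move=> euw; apply: leq_trans (dist_triangle x u w) _.
by rewrite -addn1 leq_add2l dist_le ?ball_edge.
Qed.

Lemma dist_step u z m : dist e u z = m.+1 -> exists2 w, e u w & dist e w z = m.
Proof.
rewrite distC => dzu; have := dist_ball z u; rewrite dzu in_ballS => /orP [/dist_le|].
  by rewrite dzu ltnn.
move=> /exists_inP [w w_in ewu]; exists w; first by rewrite e_sym.
by apply/eqP; rewrite distC eqn_leq dist_le //= -ltnS -dzu dist_edge.
Qed.

Lemma on_geodesic_max_distant u v z : on_geodesic e u v z -> max_distant e u v -> u = z.
Proof.
move=> /eqP geo /forallP u_max; apply/eqP; rewrite -dist_eq0.
case duz: (dist e u z) => [//|m]; have [w euw dwz] := dist_step duz.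
have := implyP (u_max w) euw; have := dist_triangle v w z.
by rewrite -geo duz dwz (distC v w) (distC v u); lia.
Qed.

Lemma SR_edge_blocking u v : SR_edge e u v -> blocking_pair e u v.
Proof.
move=> /and3P [uv u_max v_max] S /(_ u v uv) [z zS /orP [geo|geo]].
- by rewrite (on_geodesic_max_distant geo u_max) zS.
- by rewrite (on_geodesic_max_distant geo v_max) zS orbT.
Qed.

Lemma exists_SR_edge : 1 < #|T| -> exists u v, SR_edge e u v.
Proof.
move=> /card_gt1P [x0 [y0 [_ _ xy0]]].
have [[u v] _ diam] := @arg_maxnP _ (x0, y0) xpredT (fun p => dist e p.1 p.2) isT.
exists u, v; apply/and3P; split.
- by rewrite -dist_eq0 -lt0n; apply: leq_trans (diam (x0, y0) isT); rewrite lt0n dist_eq0.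
- by apply/forallP => w; apply/implyP => _; apply: diam (w, v) isT.
- apply/forallP => w; apply/implyP => _.
  by rewrite (distC w u) (distC v u); apply: diam (u, w) isT.
Qed.

End Distance.

Lemma SR_edgeC (T : finType) (e : rel T) (x y : T) : SR_edge e x y = SR_edge e y x.
Proof. by rewrite /SR_edge /mmd eq_sym (andbC (max_distant e x y)). Qed.

Lemma exists_SR_fork (T : finType) (e : rel T) : 1 < Delta_SR e ->
  exists g g1 g2, [/\ g1 != g2, SR_edge e g g1 & SR_edge e g g2].
Proof.
move=> Delta_gt1; have [x _ deg_x] : exists2 x, SR_vertex e x & 1 < SR_deg e x.
  apply/exists_inP; apply: contraTT Delta_gt1 => /exists_inPn deg_le1.
  by rewrite -leqNgt; apply/bigmax_leqP => x /deg_le1; rewrite -leqNgt.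
have /card_gt1P [g1 [g2 [gg1 gg2 g12]]] := deg_x.
by exists x, g1, g2; move: gg1 gg2; rewrite !inE.
Qed.

Section Cartesian.
Variables (T1 T2 : finType) (e1 : rel T1) (e2 : rel T2).
Local Notation P := (cart_rel e1 e2).

Lemma cart_edge_l y : {homo (fun x => (x, y)) : x x' / e1 x x' >-> P x x'}.
Proof. by move=> x x' exx'; rewrite /cart_rel /= eqxx exx' orbT. Qed.

Lemma cart_edge_r x : {homo pair x : y y' / e2 y y' >-> P y y'}.
Proof. by move=> y y' eyy'; rewrite /cart_rel /= eqxx eyy'. Qed.

Hypotheses (e1_sym : symmetric e1) (e2_sym : symmetric e2).
Hypotheses (e1_conn : connected_graph e1) (e2_conn : connected_graph e2).

Lemma cart_sym : symmetric P.
Proof. by move=> [x y] [x' y']; rewrite /cart_rel /= e1_sym e2_sym (eq_sym x) (eq_sym y). Qed.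

Lemma cart_connected : connected_graph P.
Proof.
move=> [x y] [x' y']; apply: connect_trans (connect_homo (cart_edge_l y) (e1_conn x x')) _.
by move: (e2_conn y y') => /(connect_homo (cart_edge_r x')).
Qed.

Lemma ball_cart_dist x y x' y' n :
  (x', y') \in ball P (x, y) n -> dist e1 x x' + dist e2 y y' <= n.
Proof.
elim: n x' y' => [|n IHn] x' y'.
  by rewrite in_ball0 xpair_eqE => /andP [/eqP -> /eqP ->]; rewrite !distxx.
rewrite in_ballS => /orP [/IHn /leqW //|/exists_inP [[w1 w2] /IHn dw]].
rewrite /cart_rel /= => /orP [] /andP [/eqP <- ew].
- by have := dist_edge e2_conn y ew; lia.
- by have := dist_edge e1_conn x ew; lia.
Qed.

Lemma dist_cart p q : dist P p q = dist e1 p.1 q.1 + dist e2 p.2 q.2.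
Proof.
case: p q => [x y] [x' y'] /=; apply/eqP; rewrite eqn_leq.
rewrite ball_cart_dist ?(dist_ball cart_connected) // andbT; apply: dist_le.
apply: ball_trans (ball_homo (cart_edge_l y) (dist_ball e1_conn x x')) _.
exact: ball_homo (cart_edge_r x') (dist_ball e2_conn y y').
Qed.

Lemma max_distant_cart g g' h h' :
  max_distant e1 g g' -> max_distant e2 h h' -> max_distant P (g, h) (g', h').
Proof.
move=> /forallP g_max /forallP h_max; apply/forallP => -[w1 w2]; apply/implyP.
rewrite /cart_rel !dist_cart /= => /orP [] /andP [/eqP <- ew].
- by rewrite leq_add2l (implyP (h_max w2)).
- by rewrite leq_add2r (implyP (g_max w1)).
Qed.

Lemma SR_edge_cart g g' h h' :
  SR_edge e1 g g' -> SR_edge e2 h h' -> SR_edge P (g, h) (g', h').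
Proof.
move=> /and3P [gg' g_max g'_max] /and3P [_ h_max h'_max].
by rewrite /SR_edge /mmd !max_distant_cart // xpair_eqE negb_and gg'.
Qed.

Lemma cart_fork g g1 g2 h h1 h2 :
  SR_edge e1 g g1 -> SR_edge e1 g g2 -> SR_edge e2 h h1 -> SR_edge e2 h h2 ->
  (g1, h1) != (g2, h2) -> fork P (g, h) (g1, h1) (g2, h2).
Proof.
move=> gg1 gg2 hh1 hh2 ne12.
have blocking p q : SR_edge P p q -> blocking_pair P p q.
  by apply: SR_edge_blocking; [exact: cart_sym | exact: cart_connected].
have ah1 := SR_edge_cart gg1 hh1; have ah2 := SR_edge_cart gg2 hh2.
split; [|exact: blocking ah1 | exact: blocking ah2].
by move: ah1 ah2 => /andP [ne1 _] /andP [ne2 _]; rewrite /= !inE negb_or ne1 ne2 ne12.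
Qed.

Lemma cart_OSR_is_B_l g g1 g2 h h' :
  g1 != g2 -> SR_edge e1 g g1 -> SR_edge e1 g g2 -> SR_edge e2 h h' -> OSR_is_B P.
Proof.
move=> g12 gg1 gg2 hh'; have h'h : SR_edge e2 h' h by rewrite SR_edgeC.
have ne12 (y : T2) : (g1, y) != (g2, y) by rewrite xpair_eqE negb_and g12.
apply: (OSR_is_B_of_disjoint_forks (cart_fork gg1 gg2 hh' hh' (ne12 h'))
                                   (cart_fork gg1 gg2 h'h h'h (ne12 h))).
move: gg1 gg2 hh' => /andP [gg1 _] /andP [gg2 _] /andP [hh' _].
(* (x, y) can lie in the first fork only if (x == g) = (y == h), in the second only if not. *)
rewrite disjoint_subset; apply/subsetP => -[x y]; rewrite !inE !xpair_eqE.
by have [->|/negbTE xg] := eqVneq x g; have [->|/negbTE yh] := eqVneq y h;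
  rewrite ?eqxx ?xg ?yh ?(negbTE gg1) ?(negbTE gg2) ?(negbTE hh') //= ?andbF ?orbF.
Qed.

Lemma cart_OSR_is_B_r g g' h h1 h2 :
  h1 != h2 -> SR_edge e2 h h1 -> SR_edge e2 h h2 -> SR_edge e1 g g' -> OSR_is_B P.
Proof.
move=> h12 hh1 hh2 gg'; have g'g : SR_edge e1 g' g by rewrite SR_edgeC.
have ne12 (x : T1) : (x, h1) != (x, h2) by rewrite xpair_eqE negb_and h12 orbT.
apply: (OSR_is_B_of_disjoint_forks (cart_fork gg' gg' hh1 hh2 (ne12 g'))
                                   (cart_fork g'g g'g hh1 hh2 (ne12 g))).
move: hh1 hh2 gg' => /andP [hh1 _] /andP [hh2 _] /andP [gg' _].
rewrite disjoint_subset; apply/subsetP => -[x y]; rewrite !inE !xpair_eqE.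
by have [->|/negbTE xg] := eqVneq x g; have [->|/negbTE yh] := eqVneq y h;
  rewrite ?eqxx ?xg ?yh ?(negbTE hh1) ?(negbTE hh2) ?(negbTE gg') //= ?andbF ?orbF.
Qed.

End Cartesian.

Theorem mainTheorem13 (T1 T2 : finType) (e1 : rel T1) (e2 : rel T2) :
  simple_graph e1 -> simple_graph e2 ->
  connected_graph e1 -> connected_graph e2 ->
  2 <= #|T1| -> 2 <= #|T2| ->
  (2 <= Delta_SR e1) || (2 <= Delta_SR e2) ->
  OSR_is_B (cart_rel e1 e2).
Proof.
move=> [e1_sym _] [e2_sym _] e1_conn e2_conn T1_gt1 T2_gt1.
case/orP => /exists_SR_fork.
- move=> [g [g1 [g2 [g12 gg1 gg2]]]].
  have [h [h' hh']] := exists_SR_edge e2_sym e2_conn T2_gt1.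
  exact (cart_OSR_is_B_l e1_sym e2_sym e1_conn e2_conn g12 gg1 gg2 hh').
- move=> [h [h1 [h2 [h12 hh1 hh2]]]].
  have [g [g' gg']] := exists_SR_edge e1_sym e1_conn T1_gt1.
  exact (cart_OSR_is_B_r e1_sym e2_sym e1_conn e2_conn h12 hh1 hh2 gg').
Qed.
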